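(* Let $\partial:G_1\to G_0$ be a crossed module. Then there is an exact sequence of groups $$1\to \mathrm{Der}(\pi_0(\mathbf G_* ),\pi_1(\mathbf G_* ))\to \mathbf Z_0(\mathbf G_* )\xrightarrow{\mathsf z_0} G_0,$$ where the first map sends a crossed homomorphism $\phi$ to $(1,\tilde\phi)$, with $\tilde\phi$ the composite $G_0\to\pi_0(\mathbf G_* )\xrightarrow{\phi}\pi_1(\mathbf G_* )\hookrightarrow G_1$, and $\mathsf z_0(x,\xi)=x$.
   Context: A crossed module $\mathbf G_*$ consists of groups $G_1,G_0$, a group homomorphism $\partial:G_1\to G_0$ and a left action of $G_0$ on $G_1$ by group automorphisms, $(x,a)\mapsto {}^x a$, such that $\partial({}^x a)=x\,\partial(a)\,x^{-1}$ and ${}^{\partial(b)}a=bab^{-1}$ for all $x\in G_0$, $a,b\in G_1$. $\pi_0(\mathbf G_* )=G_0/\mathrm{Im}(\partial)$ (a group) and $\pi_1(\mathbf G_* )=\ker(\partial)$, a central subgroup of $G_1$ which is a $\pi_0(\mathbf G_* )$-module via the induced action. $\mathrm{Der}(P,M)$ denotes the group of crossed homomorphisms (1-cocycles) $\phi:P\to M$, $\phi(pq)=\phi(p)+p\cdot\phi(q)$, under pointwise addition. Commutators are $[x,t]=xtx^{-1}t^{-1}$. The set $\mathbf Z_0(\mathbf G_* )$ consists of all pairs $(x,\xi)$ with $x\in G_0$ and $\xi:G_0\to G_1$ a map such that for all $s,t\in G_0$, $a\in G_1$: (Z1) $\partial\xi(t)=[x,t]$; (Z2) $\xi(\partial a)={}^x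 a\cdot a^{-1}$; (Z3) $\xi(st)=\xi(s)\,{}^s\xi(t)$. It is a group under $(x,\xi)\cdot(y,\eta)=(xy,\ t\mapsto {}^x\eta(t)\,\xi(t))$. *)

From Stdlib Require Import ClassicalEpsilon.

Set Implicit Arguments.

Record Group := {
  carrier :> Type;
  gmul : carrier -> carrier -> carrier;
  gone : carrier;
  ginv : carrier -> carrier;
  gmulA : forall x y z, gmul x (gmul y z) = gmul (gmul x y) z;
  gmul1l : forall x, gmul gone x = x;
  gmul1r : forall x, gmul x gone = x;
  gmulVl : forall x, gmul (ginv x) x = gone;
  gmulVr : forall x, gmul x (ginv x) = gone
}.

Arguments gmul {g} x y.
Arguments gone {g}.
Arguments ginv {g} x.

Definition gcomm {G : Group} (x t : G) : G :=
  gmul (gmul (gmul x t) (ginv x)) (ginv t).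

Record CrossedModule := {
  G1 : Group;
  G0 : Group;
  del : G1 -> G0;
  del_mul : forall a b, del (gmul a b) = gmul (del a) (del b);
  act : G0 -> G1 -> G1;
  act_one : forall a, act gone a = a;
  act_mul : forall x y a, act (gmul x y) a = act x (act y a);
  act_hom : forall x a b, act x (gmul a b) = gmul (act x a) (act x b);
  del_act : forall x a, del (act x a) = gmul (gmul x (del a)) (ginv x);
  peiffer : forall a b, act (del b) a = gmul (gmul b a) (ginv b)
}.

Section CM.
Variable C : CrossedModule.

Lemma del_one : del C gone = gone.
Proof.
  pose proof (del_mul C gone gone) as H. rewrite gmul1l in H.
  assert (H2 : gmul (ginv (del C gone)) (del C gone)
             = gmul (ginv (del C gone)) (gmul (del C gone) (del C gone)))
    by (f_equal; exact H).
  rewrite gmulA, gmulVl, gmul1l in H2. symmetry; exact H2.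
Qed.

Definition pi1 : Type := { a : G1 C | del C a = gone }.

Lemma pi1_mul_ker (m n : pi1) : del C (gmul (proj1_sig m) (proj1_sig n)) = gone.
Proof. destruct m as [a Ha], n as [b Hb]; simpl. rewrite del_mul, Ha, Hb. apply gmul1l. Qed.

Definition pi1_mul (m n : pi1) : pi1 := exist _ _ (pi1_mul_ker m n).

(* pi_0 = G0 / Im del, as the type of cosets x Im(del) *)
Definition coset (x : G0 C) : G0 C -> Prop :=
  fun y => exists a : G1 C, y = gmul x (del C a).

Definition pi0 : Type := { P : G0 C -> Prop | exists x, P = coset x }.

Definition q0 (x : G0 C) : pi0 := exist _ (coset x) (ex_intro _ x eq_refl).

Definition repr0 (p : pi0) : G0 C := proj1_sig (constructive_indefinite_description _ (proj2_sig p)).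

Definition pi0_mul (p r : pi0) : pi0 := q0 (gmul (repr0 p) (repr0 r)).

Lemma act_ker (x : G0 C) (m : pi1) : del C (act C x (proj1_sig m)) = gone.
Proof.
  destruct m as [a Ha]; simpl. rewrite del_act, Ha, gmul1r. apply gmulVr.
Qed.

Definition pi0_act (p : pi0) (m : pi1) : pi1 := exist _ _ (act_ker (repr0 p) m).

Definition isDer (phi : pi0 -> pi1) : Prop :=
  forall p r, phi (pi0_mul p r) = pi1_mul (phi p) (pi0_act p (phi r)).

Definition der_add (phi psi : pi0 -> pi1) : pi0 -> pi1 := fun p => pi1_mul (phi p) (psi p).

Definition inZ0 (x : G0 C) (xi : G0 C -> G1 C) : Prop :=
  (forall t, del C (xi t) = gcomm x t) /\
  (forall a, xi (del C a) = gmul (act C x a) (ginv a)) /\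
  (forall s t, xi (gmul s t) = gmul (xi s) (act C s (xi t))).

Definition Z0mul (u v : G0 C * (G0 C -> G1 C)) : G0 C * (G0 C -> G1 C) :=
  (gmul (fst u) (fst v), fun t => gmul (act C (fst u) (snd v t)) (snd u t)).

Definition z0 (u : G0 C * (G0 C -> G1 C)) : G0 C := fst u.

Definition der_tilde (phi : pi0 -> pi1) : G0 C -> G1 C := fun t => proj1_sig (phi (q0 t)).

Definition iota (phi : pi0 -> pi1) : G0 C * (G0 C -> G1 C) := (gone, der_tilde phi).

End CM.

From Stdlib Require Import ClassicalEpsilon ProofIrrelevance FunctionalExtensionality PropExtensionality.

(* The argument rests on three facts about a crossed module d : G1 -> G0:
   (a) pi_1 = ker d is central in G1 and is fixed by the action of Im d,
       so the action of G0 on pi_1 factors through pi_0 = G0 / Im d;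
   (b) the quotient map q0 : G0 -> pi_0 is multiplicative, hence composing a
       crossed homomorphism phi : pi_0 -> pi_1 with q0 gives a crossed
       homomorphism G0 -> G1, i.e. the map phi~ of the statement;
   (c) conversely, if (1, xi) lies in Z_0 then xi takes values in ker d and is
       constant on the cosets of Im d, so it descends to pi_0. *)

Section GroupFacts.
Variable G : Group.
Implicit Types a b c : G.

Lemma cancel_l a b c : gmul a b = gmul a c -> b = c.
Proof.
  intro H. rewrite <- (gmul1l _ b), <- (gmul1l _ c), <- (gmulVl _ a), <- !gmulA, H.
  reflexivity.
Qed.

Lemma inv_unique a b : gmul a b = gone -> b = ginv a.
Proof. intro H. apply (cancel_l a). rewrite H, gmulVr. reflexivity. Qed.

Lemma inv_inv a : ginv (ginv a) = a.
Proof. symmetry. apply inv_unique, gmulVl. Qed.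

Lemma idem_one a : gmul a a = a -> a = gone.
Proof. intro H. apply (cancel_l a). rewrite H, gmul1r. reflexivity. Qed.

Lemma ginv_one : ginv (@gone G) = gone.
Proof. symmetry. apply inv_unique, gmul1l. Qed.

(* [1, t] = 1: this is why the elements (1, xi) of Z_0 have xi valued in ker d. *)
Lemma gcomm_one_l (t : G) : gcomm gone t = gone.
Proof. unfold gcomm. rewrite gmul1l, ginv_one, gmul1r, gmulVr. reflexivity. Qed.

End GroupFacts.

Lemma sig_eq (A : Type) (P : A -> Prop) (u v : sig P) :
  proj1_sig u = proj1_sig v -> u = v.
Proof. destruct u, v; simpl; intros ->; f_equal; apply proof_irrelevance. Qed.

Section CrossedModuleFacts.
Variable C : CrossedModule.

Lemma act_fix_one x : act C x gone = gone.
Proof. apply idem_one. rewrite <- act_hom, gmul1l. reflexivity. Qed.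

(* Fact (a): ker d is central in G1 (a consequence of the Peiffer identity). *)
Lemma ker_central m b : del C m = gone -> gmul m b = gmul b m.
Proof.
  intro Hm. pose proof (peiffer C b m) as H. rewrite Hm, act_one in H.
  rewrite H at 2. rewrite <- !gmulA, gmulVl, gmul1r. reflexivity.
Qed.

Lemma act_del_ker m b : del C m = gone -> act C (del C b) m = m.
Proof.
  intro Hm. rewrite peiffer, <- (ker_central m b Hm), <- gmulA, gmulVr, gmul1r.
  reflexivity.
Qed.

Lemma q0_shift x a : q0 C x = q0 C (gmul x (del C a)).
Proof.
  apply sig_eq; simpl. apply functional_extensionality; intro z.
  apply propositional_extensionality; unfold coset; split.
  - intros [b ->]. exists (gmul (ginv a) b).
    rewrite <- gmulA, <- del_mul, gmulA, gmulVr, gmul1l. reflexivity.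
  - intros [c ->]. exists (gmul a c). rewrite del_mul, gmulA. reflexivity.
Qed.

Lemma repr_q0 t : exists a, repr0 (q0 C t) = gmul t (del C a).
Proof.
  unfold repr0. destruct (constructive_indefinite_description _ _) as [r Hr]; simpl in *.
  assert (Hr_t : coset C t r).
  { rewrite Hr. exists gone. rewrite del_one, gmul1r. reflexivity. }
  exact Hr_t.
Qed.

Lemma q0_repr p : q0 C (repr0 p) = p.
Proof.
  apply sig_eq; simpl. unfold repr0.
  destruct (constructive_indefinite_description _ _) as [r Hr]; simpl.
  symmetry. exact Hr.
Qed.

(* Fact (b): q0 is multiplicative, because Im d is normal in G0. *)
Lemma pi0_mul_q0 s t : pi0_mul (q0 C s) (q0 C t) = q0 C (gmul s t).
Proof.
  unfold pi0_mul. destruct (repr_q0 s) as [a Ha], (repr_q0 t) as [b Hb].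
  rewrite Ha, Hb.
  assert (Hnormal : gmul t (del C (act C (ginv t) a)) = gmul (del C a) t).
  { rewrite del_act, inv_inv, !gmulA, gmulVr, gmul1l. reflexivity. }
  replace (gmul (gmul s (del C a)) (gmul t (del C b)))
    with (gmul (gmul s t) (del C (gmul (act C (ginv t) a) b))).
  - symmetry. apply q0_shift.
  - rewrite del_mul, <- !gmulA, (gmulA _ t), Hnormal, !gmulA. reflexivity.
Qed.

Lemma pi0_act_q0 s m : proj1_sig (pi0_act (q0 C s) m) = act C s (proj1_sig m).
Proof.
  unfold pi0_act; simpl. destruct (repr_q0 s) as [a Ha]. rewrite Ha, act_mul.
  f_equal. apply act_del_ker, (proj2_sig m).
Qed.

Lemma pi1_mul_val (m n : pi1 C) :
  proj1_sig (pi1_mul m n) = gmul (proj1_sig m) (proj1_sig n).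
Proof. reflexivity. Qed.

Lemma der_one phi : isDer phi -> proj1_sig (phi (q0 C gone)) = gone.
Proof.
  intro Hphi. pose proof (f_equal (@proj1_sig _ _) (Hphi (q0 C gone) (q0 C gone))) as H.
  rewrite pi0_mul_q0, gmul1l, pi1_mul_val, pi0_act_q0, act_one in H.
  apply idem_one. symmetry. exact H.
Qed.

Lemma iota_inZ0 phi : isDer phi -> inZ0 C gone (der_tilde phi).
Proof.
  intro Hphi. unfold der_tilde. split; [|split].
  - intro t. rewrite gcomm_one_l. apply (proj2_sig (phi (q0 C t))).
  - intro a. rewrite act_one, gmulVr, <- (gmul1l _ (del C a)), <- q0_shift.
    apply der_one, Hphi.
  - intros s t. rewrite <- pi0_mul_q0, Hphi, pi1_mul_val, pi0_act_q0. reflexivity.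
Qed.

(* iota turns pointwise addition into the product of Z_0, since pi_1 is central. *)
Lemma iota_add (phi psi : pi0 C -> pi1 C) :
  iota (der_add phi psi) = Z0mul C (iota phi) (iota psi).
Proof.
  unfold iota, Z0mul; simpl. rewrite gmul1l. f_equal.
  apply functional_extensionality; intro t. unfold der_tilde, der_add; simpl.
  rewrite act_one. apply ker_central, (proj2_sig (phi (q0 C t))).
Qed.

(* iota is injective, since q0 is surjective. *)
Lemma iota_inj (phi psi : pi0 C -> pi1 C) : iota phi = iota psi -> phi = psi.
Proof.
  intro H. injection H as Htilde.
  apply functional_extensionality; intro p. rewrite <- (q0_repr p).
  apply sig_eq. exact (f_equal (fun f => f (repr0 p)) Htilde).
Qed.

Lemma Z0_ker_values {xi : G0 C -> G1 C} : inZ0 C gone xi -> forall t, del C (xi t) = gone.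
Proof. intros [Hdel _] t. rewrite Hdel. apply gcomm_one_l. Qed.

Lemma Z0_ker_coset_invariant xi :
  inZ0 C gone xi -> forall t a, xi (gmul t (del C a)) = xi t.
Proof.
  intros [_ [Htriv Hcocycle]] t a.
  rewrite Hcocycle, Htriv, act_one, gmulVr, act_fix_one, gmul1r. reflexivity.
Qed.

Lemma Z0_ker_in_image xi :
  inZ0 C gone xi -> exists phi, isDer phi /\ (gone, xi) = iota phi.
Proof.
  intro HZ.
  set (phi := fun p : pi0 C =>
         exist (fun a => del C a = gone) (xi (repr0 p)) (Z0_ker_values HZ (repr0 p)) : pi1 C).
  assert (Hdescend : forall t, xi (repr0 (q0 C t)) = xi t).
  { intro t. destruct (repr_q0 t) as [a ->]. apply Z0_ker_coset_invariant, HZ. }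
  exists phi. split.
  - intros p r. apply sig_eq. simpl. unfold pi0_mul.
    rewrite Hdescend. apply HZ.
  - unfold iota. f_equal. apply functional_extensionality; intro t.
    unfold der_tilde, phi; simpl. symmetry. apply Hdescend.
Qed.

End CrossedModuleFacts.

Theorem lemma3p5 (C : CrossedModule) :
  (* the first map is well defined: iota(phi) lies in Z_0 *)
  (forall phi : pi0 C -> pi1 C, isDer phi ->
     inZ0 C (fst (iota phi)) (snd (iota phi))) /\
  (* it is a group homomorphism *)
  (forall phi psi : pi0 C -> pi1 C, isDer phi -> isDer psi ->
     iota (der_add phi psi) = Z0mul C (iota phi) (iota psi)) /\
  (* it is injective (exactness at Der) *)
  (forall phi psi : pi0 C -> pi1 C, isDer phi -> isDer psi ->
     iota phi = iota psi -> phi = psi) /\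
  (* z0 is a group homomorphism on Z_0 *)
  (forall u v, inZ0 C (fst u) (snd u) -> inZ0 C (fst v) (snd v) ->
     z0 C (Z0mul C u v) = gmul (z0 C u) (z0 C v)) /\
  (* exactness at Z_0: ker z0 = im iota *)
  (forall u, inZ0 C (fst u) (snd u) ->
     (z0 C u = gone <-> exists phi : pi0 C -> pi1 C, isDer phi /\ u = iota phi)).
Proof.
  split; [|split; [|split; [|split]]].
  - intros phi Hphi. apply iota_inZ0, Hphi.
  - intros phi psi _ _. apply iota_add.
  - intros phi psi _ _. apply iota_inj.
  - reflexivity.
  - intros [x xi] HZ. unfold z0; simpl in *. split.
    + intros Hx. subst x. apply Z0_ker_in_image, HZ.
    + intros [phi [_ Hu]]. injection Hu as Hx _. exact Hx.
Qed.
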